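(* Let $X$ be finite and $t$ any transition function. Then $t$ is menu invariant, i.e. there exists $\nu\in\Delta(\mathcal{L}(X))$ with $\nu M_A=\nu$ for all $A\in\mathcal{X}_2$, if and only if $t$ satisfies no weak investment: for every investment plan $i$ there exists $\succ\in\mathcal{L}(X)$ with $$\sum_{(A,\succ')\in\mathcal{X}_2\times\mathcal{L}(X)} i(A,\succ')\,t_{\succ'}(M(\succ,A),\succ)\le\sum_{A\in\mathcal{X}_2}i(A,\succ).$$
   Context: $\mathcal{X}_2$ is the collection of subsets of $X$ with at least two elements, $\mathcal{L}(X)$ the linear orders on $X$, $M(\succ,A)$ the $\succ$-maximal element of $A$. A transition function is $t:X\times\mathcal{L}(X)\to\Delta(\mathcal{L}(X))$, with $t_{\succ'}(x,\succ)$ the probability of $\succ'$ under $t(x,\succ)$. For $A\in\mathcal{X}_2$, $M_A$ is the Markov matrix on $\mathcal{L}(X)$ with entries $m_A(\succ,\succ')=t_{\succ'}(M(\succ,A),\succ)$; distributions are row vectors. An investment plan is any function $i:\mathcal{X}_2\times\mathcal{L}(X)\to\mathbb{R}_{\ge0}$. *)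

From HB Require Import structures.
From mathcomp Require Import all_boot all_order all_algebra.
From mathcomp Require Import reals.
Set Implicit Arguments. Unset Strict Implicit. Unset Printing Implicit Defensive.
Import Order.TTheory GRing.Theory Num.Theory.
Local Open Scope ring_scope.

Section Defs.
Variable X : finType.

(* A linear order on X, represented by its strict relation x ≻ y as r (x,y):
   irreflexive, transitive and total on distinct elements. *)
Definition is_lin (r : {ffun X * X -> bool}) : bool :=
  [&& [forall x, ~~ r (x, x)],
      [forall x, forall y, forall z, r (x, y) && r (y, z) ==> r (x, z)] &
      [forall x, forall y, (x != y) ==> r (x, y) || r (y, x)]].

Definition linord := {r : {ffun X * X -> bool} | is_lin r}.

Definition succ (r : linord) (x y : X) : bool := val r (x, y).

Definition maxel (r : linord) (A : {set X}) : option X :=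
  [pick x in A | [forall y in A, (y != x) ==> succ r x y]].

Definition inX2 (A : {set X}) : bool := (1 < #|A|)%N.

Variable R : realType.

Definition is_distr (nu : linord -> R) : Prop :=
  (forall r, 0 <= nu r) /\ \sum_(r : linord) nu r = 1.

(* transition function t : X × L(X) → Δ(L(X)); t x r r' = t_{r'}(x, r) *)
Definition is_transition (t : X -> linord -> linord -> R) : Prop :=
  forall x r, is_distr (t x r).

Definition mA (t : X -> linord -> linord -> R) (A : {set X}) (r r' : linord) : R :=
  match maxel r A with Some x => t x r r' | None => 0 end.

Definition menu_invariant (t : X -> linord -> linord -> R) : Prop :=
  exists nu : linord -> R, is_distr nu /\
    forall A, inX2 A -> forall r', \sum_(r : linord) nu r * mA t A r r' = nu r'.

Definition investment_plan (i : {set X} -> linord -> R) : Prop :=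
  forall A r, inX2 A -> 0 <= i A r.

Definition no_weak_investment (t : X -> linord -> linord -> R) : Prop :=
  forall i, investment_plan i -> exists r : linord,
    \sum_(A : {set X} | inX2 A) \sum_(r' : linord) i A r' * mA t A r r'
      <= \sum_(A : {set X} | inX2 A) i A r.
End Defs.

(* Both conditions are dual linear conditions on the vectors
   [drift r = (m_A(r, .) - delta_r)_(A in X_2)], one for each order [r].
   The net return of a plan [i] from [r] is the scalar product of [i] with
   [drift r], and it is unchanged when [i] is shifted by a constant because
   every [M_A] is stochastic.  A stationary [nu] averages all net returns to
   zero, so some order has a nonpositive one.  Conversely, no weak investment
   says that no vector has positive scalar product with every drift, and
   Gordan's alternative, proved by Fourier-Motzkin elimination, then puts 0 in
   the convex hull of the drifts: the convex weights form the common invariant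
   distribution. *)

From mathcomp Require Import all_boot all_order all_algebra reals.
From mathcomp.algebra_tactics Require Import ring lra.
Set Implicit Arguments. Unset Strict Implicit. Unset Printing Implicit Defensive.
Import Order.TTheory GRing.Theory Num.Theory.
Local Open Scope ring_scope.

Lemma exists_between (R : realFieldType) (ls us : seq R) : {in ls & us, forall a b, a < b} ->
  exists t, {in ls, forall a, a < t} /\ {in us, forall b, t < b}.
Proof.
move=> lt_ls_us.
pose b0 := \big[Num.min/0]_(u <- us) u - 1.
have b0_lt u : u \in us -> b0 < u.
  by move=> uus; rewrite ltrBlDr ltr_pwDr ?ltr01 // ge_bigmin_seq.
pose M := \big[Num.max/b0]_(l <- ls) l.
pose m := \big[Num.min/M + 1]_(u <- us) u.
have M_lt u : u \in us -> M < u.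
  move=> uus; rewrite /M big_seq bigmax_lt ?b0_lt // => l lls.
  exact: lt_ls_us.
have M_lt_m : M < m.
  by rewrite /m big_seq lt_bigmin ?ltrDl ?ltr01.
exists ((M + m) / 2); split => [l lls|u uus].
  have l_le_M : l <= M by exact: le_bigmax_seq.
  by rewrite ltr_pdivlMr //; lra.
have m_le_u : m <= u by exact: ge_bigmin_seq.
by rewrite ltr_pdivrMr //; lra.
Qed.

Lemma sum_fibers (I : finType) (T : Type) (V : nmodType) (r : seq T)
    (f : T -> I) (F : T -> V) :
  \sum_i \sum_(p <- r | f p == i) F p = \sum_(p <- r) F p.
Proof.
rewrite (exchange_big_dep predT) //=; apply: eq_bigr => p _.
by rewrite (big_pred1 (f p)) // => i; rewrite /= eq_sym.
Qed.

Section Gordan.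
Variables (R : realFieldType) (K : finType).
Local Notation vec := {ffun K -> R}.

Definition dot (y : K -> R) (g : vec) := \sum_k y k * g k.

Definition mix (a : R) (g h : vec) : vec := [ffun k => a * g k + (1 - a) * h k].

Lemma dot_mix y a g h : dot y (mix a g h) = a * dot y g + (1 - a) * dot y h.
Proof.
rewrite /dot !mulr_sumr -big_split /=; apply: eq_bigr => k _.
by rewrite ffunE; ring.
Qed.

Lemma dot_shift y c (e : R) g :
  dot (fun k => y k + (k == c)%:R * e) g = dot y g + e * g c.
Proof.
rewrite /dot (bigD1 c) // [in RHS](bigD1 c) //= eqxx.
rewrite (eq_bigr (fun k => y k * g k)) => [|k /negbTE->]; last by rewrite mul0r addr0.
by rewrite mul1r; ring.
Qed.

Definition in_hull (s : seq vec) (v : vec) := exists w : seq (R * vec),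
  [/\ all (fun p => (0 <= p.1) && (p.2 \in s)) w, \sum_(p <- w) p.1 = 1
    & forall k, \sum_(p <- w) p.1 * p.2 k = v k].

Lemma in_hull_mem (s : seq vec) v : v \in s -> in_hull s v.
Proof.
move=> vs; exists [:: (1, v)].
by rewrite /= vs ler01 big_seq1; split=> // k; rewrite big_seq1 mul1r.
Qed.

Lemma in_hull_mix (s : seq vec) g h a : g \in s -> h \in s -> 0 <= a <= 1 ->
  in_hull s (mix a g h).
Proof.
move=> gs hs /andP[a0 a1]; exists [:: (a, g); (1 - a, h)].
rewrite /= gs hs a0 subr_ge0 a1 !big_cons !big_nil /= !addr0.
split=> // [|k]; first by rewrite addrC subrK.
by rewrite !big_cons big_nil addr0 ffunE.
Qed.

Lemma in_hull_coord0 (s : seq vec) v k :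
  {in s, forall g : vec, g k = 0} -> in_hull s v -> v k = 0.
Proof.
move=> s0 [w [w_in _ <-]]; rewrite big_seq big1 // => p pw.
by case/andP: (allP w_in p pw) => _ /s0 ->; rewrite mulr0.
Qed.

Lemma nonneg_comb_hull (s s' : seq vec) (w' : seq (R * vec)) :
  {in s', forall v, in_hull s v} -> all (fun p => (0 <= p.1) && (p.2 \in s')) w' ->
  exists w, [/\ all (fun p => (0 <= p.1) && (p.2 \in s)) w,
    \sum_(p <- w) p.1 = \sum_(p <- w') p.1
    & forall k, \sum_(p <- w) p.1 * p.2 k = \sum_(p <- w') p.1 * p.2 k].
Proof.
move=> s'_hull; elim: w' => [|[a v] w' IH] /=; first by exists [::].
case/andP=> /andP[a0 /s'_hull[u [u_in u1 u_v]]] /IH[w [w_in w_sum w_comb]].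
exists ([seq (a * p.1, p.2) | p <- u] ++ w); split.
- rewrite all_cat w_in andbT all_map; apply/allP => p pu /=.
  by case/andP: (allP u_in p pu) => p0 ->; rewrite mulr_ge0.
- by rewrite big_cat big_map big_cons /= -mulr_sumr u1 mulr1 w_sum.
- move=> k; rewrite big_cat big_map big_cons /= w_comb -u_v mulr_sumr.
  by congr (_ + _); apply: eq_bigr => p _; rewrite mulrA.
Qed.

Lemma in_hull_trans (s s' : seq vec) v : {in s', forall u, in_hull s u} ->
  in_hull s' v -> in_hull s v.
Proof.
move=> s'_hull [w' [w'_in w'1 w'_v]].
have [w [w_in w1 w_v]] := nonneg_comb_hull s'_hull w'_in.
by exists w; split=> // [|k]; rewrite ?w1 // w_v.
Qed.

(* The point where the segment from [g] to [h] crosses the hyperplane [x_c = 0]. *)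
Definition cross c (g h : vec) : vec := mix (h c / (h c - g c)) g h.

Definition elim_coord c (s : seq vec) : seq vec :=
  [seq cross c g h | g <- [seq g : vec <- s | 0 < g c],
                    h <- [seq h : vec <- s | h c < 0]]
  ++ [seq g : vec <- s | g c == 0].

Lemma mem_elim_coord c (s : seq vec) v : v \in elim_coord c s ->
  (exists g h, [/\ g \in s, h \in s, 0 < g c, h c < 0 & v = cross c g h])
  \/ v \in s /\ v c = 0.
Proof.
rewrite mem_cat mem_filter => /orP[/allpairsP[[g h] /=]|/andP[/eqP vc0 vs]].
  by rewrite !mem_filter => -[/andP[gc gs] /andP[hc hs] ->]; left; exists g, h.
by right.
Qed.

Lemma elim_coord_hull c (s : seq vec) :
  {in elim_coord c s, forall v, in_hull s v}.
Proof.
move=> v /mem_elim_coord[[g [h [gs hs gc hc ->]]]|[vs _]]; last exact: in_hull_mem.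
apply: in_hull_mix => //.
have hgc : h c - g c < 0 by lra.
by rewrite ler_ndivlMr // ler_ndivrMr // mul0r mul1r; apply/andP; split; lra.
Qed.

Lemma elim_coord_zero c (s : seq vec) :
  {in elim_coord c s, forall v : vec, v c = 0}.
Proof.
move=> v /mem_elim_coord[[g [h [_ _ gc hc ->]]]|[_ //]].
by rewrite /cross ffunE; field; lra.
Qed.

Lemma elim_coord_pos c (s : seq vec) y :
  {in elim_coord c s, forall v, 0 < dot y v} ->
  exists y', {in s, forall g, 0 < dot y' g}.
Proof.
move=> y_pos.
pose P := [seq g : vec <- s | 0 < g c]; pose N := [seq h : vec <- s | h c < 0].
pose bound (g : vec) := - dot y g / g c.
have bound_lt : {in map bound P & map bound N, forall a b, a < b}.
  move=> _ _ /mapP[g gP ->] /mapP[h hN ->].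
  move: (gP) (hN); rewrite !mem_filter => /andP[gc _] /andP[hc _].
  have num_pos : 0 < g c * dot y h - h c * dot y g.
    have cross_pos : 0 < dot y (cross c g h) by rewrite y_pos // mem_cat allpairs_f.
    suff -> : g c * dot y h - h c * dot y g = dot y (cross c g h) * (g c - h c).
      by rewrite mulr_gt0 // subr_gt0; lra.
    by rewrite dot_mix; field; lra.
  rewrite -subr_gt0; have -> : bound h - bound g
      = (g c * dot y h - h c * dot y g) / (g c * - h c).
    by rewrite /bound; field; apply/andP; split; lra.
  by rewrite divr_gt0 // mulr_gt0 // oppr_gt0.
(* Moving [y] by [e] along [c] makes [g] positive iff [e] lies on the correct
   side of [bound g]; positivity on the crossing points separates the bounds. *)
have [e [lt_e e_lt]] := exists_between bound_lt.
exists (fun k => y k + (k == c)%:R * e) => g gs; rewrite dot_shift.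
have [gc|gc|gc] := ltrgtP 0 (g c).
- have := lt_e (bound g) (map_f _ _); rewrite mem_filter gc gs => /(_ isT).
  by rewrite /bound ltr_pdivrMr //; lra.
- have := e_lt (bound g) (map_f _ _); rewrite mem_filter gc gs => /(_ isT).
  by rewrite /bound ltr_ndivlMr //; lra.
- rewrite -gc mulr0 addr0; apply: y_pos.
  by rewrite mem_cat mem_filter -gc eqxx gs orbT.
Qed.

Lemma gordan_on (S : {set K}) (s : seq vec) :
  {in s, forall g : vec, forall k, k \notin S -> g k = 0} ->
  ~ (exists y, {in s, forall g, 0 < dot y g}) -> in_hull s 0.
Proof.
have [n] := ubnP #|S|; elim: n S s => // n IH S s.
rewrite ltnS => le_S_n supp no_pos.
have [S0|[c cS]] := set_0Vmem S.
  case: s supp no_pos => [|g s] supp no_pos; first by case: no_pos; exists (fun=> 0).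
  have -> : 0 = g by apply/ffunP => k; rewrite ffunE supp ?mem_head // S0 inE.
  exact/in_hull_mem/mem_head.
apply: in_hull_trans (elim_coord_hull (c := c) (s := s)) _.
apply: (IH (S :\ c)).
- by move: le_S_n; rewrite (cardsD1 c S) cS.
- move=> v vE k; rewrite in_setD1 negb_and negbK => /orP[/eqP->|kS].
    exact: (elim_coord_zero vE).
  by apply: in_hull_coord0 (elim_coord_hull vE) => g gs; apply: supp.
- by case=> y y_pos; apply: no_pos; exact: elim_coord_pos y_pos.
Qed.

Theorem gordan (s : seq vec) :
  ~ (exists y, {in s, forall g, 0 < dot y g}) -> in_hull s 0.
Proof. by apply: (gordan_on (S := setT)) => g _ k; rewrite in_setT. Qed.

Corollary gordan_family (I : finType) (g : I -> vec) :
  ~ (exists y, forall i, 0 < dot y (g i)) ->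
  exists lam : I -> R, [/\ forall i, 0 <= lam i, \sum_i lam i = 1
    & forall k, \sum_i lam i * g i k = 0].
Proof.
move=> no_pos.
have [w [w_in w1 w0]] : in_hull (map g (enum I)) 0.
  apply: gordan => -[y y_pos]; apply: no_pos; exists y => i.
  by apply: y_pos; rewrite map_f ?mem_enum.
have [w' def_w] : exists w' : seq (R * I), w = [seq (p.1, g p.2) | p <- w'].
  elim: w w_in {w1 w0} => [|[a v] w IH] /=; first by exists [::].
  by case/andP=> /andP[_ /mapP[i _ ->]] /IH[w' ->]; exists ((a, i) :: w').
move: w_in w1 w0; rewrite def_w all_map big_map => w'_ge0 w'1 w'0.
exists (fun i => \sum_(p <- w' | p.2 == i) p.1); split.
- move=> i; rewrite big_seq_cond; apply: sumr_ge0 => p /andP[pw _].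
  by case/andP: (allP w'_ge0 p pw).
- by rewrite sum_fibers.
- move=> k; transitivity (\sum_(p <- w') p.1 * g p.2 k); last first.
    by have := w'0 k; rewrite big_map ffunE.
  rewrite -(sum_fibers _ (fun p => p.2)); apply: eq_bigr => i _.
  by rewrite mulr_suml; apply: eq_bigr => p /eqP ->.
Qed.

End Gordan.

Lemma exists_le_mean (R : realDomainType) (T : finType) (nu f : T -> R) :
  (forall x, 0 <= nu x) -> \sum_x nu x = 1 -> \sum_x nu x * f x <= 0 ->
  exists x, f x <= 0.
Proof.
move=> nu_ge0 nu1 mean_le0.
have [x0 _|T0] := pickP (@predT T); last first.
  by move: nu1; rewrite big_pred0 // => /esym/eqP; rewrite oner_eq0.
have [m _ m_min] := @arg_minP _ R T x0 predT f isT.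
exists m; apply: le_trans mean_le0.
rewrite -[f m]mul1r -nu1 mulr_suml; apply: ler_sum => x _.
by rewrite ler_wpM2l ?m_min.
Qed.

Section LinearOrder.
Variables (X : finType) (r : linord X).

Lemma linord_axioms :
  [/\ forall x, ~~ succ r x x,
      forall x y z, succ r x y -> succ r y z -> succ r x z
    & forall x y, x != y -> succ r x y || succ r y x].
Proof.
have := valP r; rewrite /is_lin => /and3P[/forallP irr /forallP trans /forallP total].
split=> [x | x y z xy yz | x y]; first exact: irr.
  by have /forallP/(_ y)/forallP/(_ z)/implyP := trans x; apply; apply/andP.
by have /forallP/(_ y)/implyP := total x.
Qed.

Lemma maxel_some (A : {set X}) : A != set0 -> exists x, maxel r A = Some x.
Proof.
case/set0Pn => x0 x0A.
(* an element of [A] dominating the most elements of [A] dominates all of them *)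
pose dominated x := [set z in A | succ r x z].
have [m m_in m_max] := arg_maxnP (fun x => #|dominated x|) x0A.
rewrite /maxel; case: pickP => [x _|none]; first by exists x.
have {}m_in : m \in A := m_in.
case/negP: (negbT (none m)); rewrite m_in /=.
apply/forall_inP => y yA; apply/implyP => y_neq_m.
have [irr trans total] := linord_axioms.
have /orP[//|y_m] : succ r m y || succ r y m by apply: total; rewrite eq_sym.
have : (#|dominated m| < #|dominated y|)%N.
  apply/proper_card/properP; split.
    apply/subsetP => z; rewrite !inE => /andP[-> /(trans _ _ _ y_m)] //.
  by exists m; rewrite !inE ?m_in ?y_m // (negbTE (irr m)) andbF.
by move/leq_trans/(_ (m_max y yA)); rewrite ltnn.
Qed.

End LinearOrder.

Section MenuInvariance.
Variables (X : finType) (R : realType) (t : X -> linord X -> linord X -> R).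
Local Notation L := (linord X).

Definition net_return (i : {set X} -> L -> R) (r : L) : R :=
  \sum_(A | inX2 A) (\sum_r' i A r' * mA t A r r' - i A r).

Lemma net_return_le0 i r : (net_return i r <= 0) =
  (\sum_(A | inX2 A) \sum_r' i A r' * mA t A r r' <= \sum_(A | inX2 A) i A r).
Proof. by rewrite /net_return sumrB subr_le0. Qed.

Lemma stationary_net_return (nu : L -> R) i :
  (forall A, inX2 A -> forall r', \sum_r nu r * mA t A r r' = nu r') ->
  \sum_r nu r * net_return i r = 0.
Proof.
move=> nu_inv; under eq_bigr do rewrite mulr_sumr.
rewrite exchange_big /=; apply: big1 => A A2.
rewrite -[RHS](subrr (\sum_r' i A r' * nu r')); under eq_bigr do rewrite mulrBr.
rewrite sumrB; congr (_ - _); last by apply: eq_bigr => r _; rewrite mulrC.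
under eq_bigr do rewrite mulr_sumr; rewrite exchange_big /=.
apply: eq_bigr => r' _; rewrite -(nu_inv A A2 r') mulr_sumr.
by apply: eq_bigr => r _; rewrite mulrCA.
Qed.

Definition drift (r : L) : {ffun {set X} * L -> R} :=
  [ffun k => if inX2 k.1 then mA t k.1 r k.2 - (k.2 == r)%:R else 0].

Lemma dot_drift y r : dot y (drift r) = net_return (fun A r' => y (A, r')) r.
Proof.
transitivity (\sum_A \sum_r' y (A, r') * drift r (A, r')).
  by rewrite pair_bigA; apply: eq_bigr => -[].
rewrite /net_return [in RHS]big_mkcond /=; apply: eq_bigr => A _.
case: ifP => A2; last by apply: big1 => r' _; rewrite ffunE /= A2 mulr0.
rewrite -(big_pred1_eq +%R r (fun r' => y (A, r'))) [in RHS]big_mkcond -sumrB /=.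
by apply: eq_bigr => r' _; rewrite ffunE /= A2 mulrBr mulr_natr mulrb.
Qed.

Hypothesis t_trans : is_transition t.

Lemma mA_row_sum A r : inX2 A -> \sum_r' mA t A r r' = 1.
Proof.
move=> A2; have [x max_x] : exists x, maxel r A = Some x.
  by apply: maxel_some; rewrite -card_gt0 ltnW.
by rewrite /mA max_x; case: (t_trans x r).
Qed.

Lemma net_return_shift i C r :
  net_return (fun A r' => i A r' + C) r = net_return i r.
Proof.
apply: eq_bigr => A A2; under eq_bigr do rewrite mulrDl.
by rewrite big_split /= -mulr_sumr mA_row_sum // mulr1 opprD addrACA subrr addr0.
Qed.

Lemma menu_invariant_no_weak_investment :
  menu_invariant t -> no_weak_investment t.
Proof.
move=> [nu [[nu_ge0 nu1] nu_inv]] i _.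
have [r] : exists r, net_return i r <= 0.
  by apply: exists_le_mean nu_ge0 nu1 _; rewrite stationary_net_return.
by rewrite net_return_le0; exists r.
Qed.

Lemma no_weak_investment_menu_invariant :
  no_weak_investment t -> menu_invariant t.
Proof.
move=> nwi.
have no_pos : ~ exists y, forall r, 0 < dot y (drift r).
  case=> y y_pos; pose C := \sum_k `|y k|.
  have plan : investment_plan (fun A r' => y (A, r') + C).
    move=> A r' _; have := ler_norm (- y (A, r')); rewrite normrN.
    have : `|y (A, r')| <= C by rewrite /C (bigD1 (A, r')) //= lerDl sumr_ge0.
    lra.
  have [r] := nwi _ plan.
  by rewrite -net_return_le0 net_return_shift -dot_drift leNgt y_pos.
have [lam [lam_ge0 lam1 lam0]] := gordan_family no_pos.
exists lam; split=> // A A2 r'; apply/eqP; rewrite -subr_eq0; apply/eqP.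
rewrite -[RHS](lam0 (A, r')) -(big_pred1_eq +%R r' lam).
rewrite [\sum_(j | j == r') _]big_mkcond -sumrB /=; apply: eq_bigr => r _.
by rewrite ffunE /= A2 mulrBr mulr_natr mulrb eq_sym.
Qed.

End MenuInvariance.

Theorem theorem9 (X : finType) (R : realType) (t : X -> linord X -> linord X -> R) :
  is_transition t -> (menu_invariant t <-> no_weak_investment t).
Proof.
move=> t_trans; split; first exact: menu_invariant_no_weak_investment.
exact: no_weak_investment_menu_invariant.
Qed.
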